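(* Let ${\cal H}\subset{\cal H}_0$, ${\mathcal D}$, $b$, $\mu_\ell^{-1}$, $\epsilon_\ell$, $a_\ell$, ${\mathcal A}_\ell$ ($\ell=1,2$) be as in the context (in particular, the standing assumptions there hold). Let $({\cal H}_N)_{N=1}^\infty$ be finite-dimensional subspaces of ${\cal H}$, and for each $N$ let $\mathsf{A}_1,\mathsf{A}_2$ be the associated Galerkin matrices and $\mathsf{D}$, $m_\pm$ as in the context. Suppose ${\mathcal A}_1:{\cal H}\to{\cal H}^*$ is invertible and there exists $C_1>0$ such that for all $N\in\mathbb{Z}^+$ $$\inf_{u_N\in {\cal H}_N\setminus\{0\}} \sup_{v_N\in {\cal H}_N\setminus\{0\}} \frac{|a_1(u_N,v_N)|}{\|u_N\|_{{\cal H}}\|v_N\|_{{\cal H}}}\geq \frac{1}{C_1\|{\mathcal A}_1^{-1}\|_{{\cal H}^*\to{\cal H}}}$$ and, for all $v_N\in{\cal H}_N\setminus\{0\}$, $\sup_{u_N\in{\cal H}_N\setminus\{0\}}|a_1(u_N,v_N)|>0$. If $$\Big(\|\mu_1^{-1}-\mu_2^{-1}\|_{{\cal H}_0\to{\cal H}_0}+\|\epsilon_1-\epsilon_2\|_{{\cal H}_0\to{\cal H}_0}\Big)C_1\|{\mathcal A}_1^{-1}\|_{{\cal H}^*\to{\cal H}}\leq \tfrac12,$$ then $\mathsf{A}_2^{-1}$ exists and $$\max\Big\{\|\mathsf{I}-\mathsf{A}_2^{-1}\mathsf{A}_1\|_{\mathsf{D}},\ \|\mathsf{I}-\mathsf{A}_1\mathsf{A}_2^{-1}\|_{\mathsf{D}^{-1}}\Big\}\leq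 2\Big(\|\mu_1^{-1}-\mu_2^{-1}\|_{{\cal H}_0\to{\cal H}_0}+\|\epsilon_1-\epsilon_2\|_{{\cal H}_0\to{\cal H}_0}\Big)C_1\|{\mathcal A}_1^{-1}\|_{{\cal H}^*\to{\cal H}}.$$ Furthermore, if $\mu_1=\mu_2$, then $$\max\Big\{\|\mathsf{I}-\mathsf{A}_2^{-1}\mathsf{A}_1\|_2,\ \|\mathsf{I}-\mathsf{A}_1\mathsf{A}_2^{-1}\|_2\Big\}\leq 2\frac{m_+}{m_-}\|\epsilon_1-\epsilon_2\|_{{\cal H}_0\to{\cal H}_0}C_1\|{\mathcal A}_1^{-1}\|_{{\cal H}^*\to{\cal H}}.$$
   Context: Standing assumptions: ${\cal H}\subset{\cal H}_0$ are complex Hilbert spaces with $\|v\|_{{\cal H}_0}\le\|v\|_{{\cal H}}$ for $v\in{\cal H}$, and ${\cal H}_0$ is identified with its dual so that ${\cal H}\subset{\cal H}_0\subset{\cal H}^*$. ${\mathcal D}:{\cal H}\to{\cal H}_0$ is linear with $\|{\mathcal D}\|_{{\cal H}\to{\cal H}_0}\le 1$; $b(\cdot,\cdot)$ is a continuous sesquilinear form on ${\cal H}$; for $\ell=1,2$, $\mu_\ell^{-1}:{\cal H}_0\to{\cal H}_0$ and $\epsilon_\ell:{\cal H}_0\to{\cal H}_0$ are bounded linear operators, and $a_\ell(u,v):=(\mu_\ell^{-1}{\mathcal D}u,{\mathcal D}v)_{{\cal H}_0}+b(u,v)-(\epsilon_\ell u,v)_{{\cal H}_0}$. For $\ell=1,2$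 there exist $C_{{\rm G1},\ell},C_{{\rm G2},\ell}>0$ with $|a_\ell(v,v)+C_{{\rm G2},\ell}\|v\|_{{\cal H}_0}^2|\ge C_{{\rm G1},\ell}\|v\|_{{\cal H}}^2$ for all $v\in{\cal H}$. ${\mathcal A}_\ell:{\cal H}\to{\cal H}^*$ is defined by $\langle{\mathcal A}_\ell u,v\rangle_{{\cal H}^*\times{\cal H}}=a_\ell(u,v)$. Discrete notation: ${\cal H}_N\subset{\cal H}$ has basis $\{\phi_j\}_{j=1}^N$; $(\mathsf{A}_\ell)_{ij}=a_\ell(\phi_j,\phi_i)$. $\mathsf{D}$ is the Hermitian positive-definite matrix such that, writing $\|\mathbf V\|_{\mathsf D}:=(\mathsf D\mathbf V,\mathbf V)_2^{1/2}$, one has $\|\sum_j V_j\phi_j\|_{{\cal H}}=\|\mathbf V\|_{\mathsf D}$ for all $\mathbf V\in\mathbb{C}^N$; $\|\mathbf V\|_{\mathsf D^{-1}}:=(\mathsf D^{-1}\mathbf V,\mathbf V)_2^{1/2}$; matrix norms $\|\cdot\|_{\mathsf D}$, $\|\cdot\|_{\mathsf D^{-1}}$, $\|\cdot\|_2$ are those induced by the corresponding vector norms ($\|\cdot\|_2$ Euclidean). $m_\pm>0$ are such that $m_-\|\mathbf V\|_2\le\|\sum_jV_j\phi_j\|_{{\cal H}_0}\le m_+\|\mathbf V\|_2$ for all $\mathbf V\in\mathbb{C}^N$. *)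

From HB Require Import structures.
From mathcomp Require Import all_boot all_order all_algebra.
From mathcomp Require Import complex.
From mathcomp Require Import boolp classical_sets reals.
Set Implicit Arguments.
Unset Strict Implicit.
Unset Printing Implicit Defensive.
Import Order.TTheory GRing.Theory Num.Theory.
Local Open Scope ring_scope.
Local Open Scope classical_set_scope.

Section Defs.
Variable R : realType.
Local Notation C := R[i].

Definition cmod (z : C) : R := ComplexField.Normc.normc z.

Definition is_linear (V W : lmodType C) (f : V -> W) :=
  forall (a : C) (u v : V), f (a *: u + v) = a *: f u + f v.

Definition is_linear_form (V : lmodType C) (f : V -> C) :=
  forall (a : C) (u v : V), f (a *: u + v) = a * f u + f v.

Definition is_antilinear_form (V : lmodType C) (f : V -> C) :=
  forall (a : C) (u v : V), f (a *: u + v) = conjc a * f u + f v.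

Definition is_sesquilinear (V : lmodType C) (s : V -> V -> C) :=
  (forall v, is_linear_form (fun u => s u v)) /\
  (forall u, is_antilinear_form (s u)).

Definition is_inner_product (V : lmodType C) (ip : V -> V -> C) :=
  [/\ forall v, is_linear_form (fun u => ip u v),
      forall u v, ip v u = conjc (ip u v),
      forall v, 0 <= complex.Re (ip v v)
    & forall v, ip v v = 0 -> v = 0].

Definition ipnorm (V : lmodType C) (ip : V -> V -> C) (v : V) : R :=
  Num.sqrt (complex.Re (ip v v)).

Definition complete_for (V : lmodType C) (ip : V -> V -> C) :=
  forall u : nat -> V,
    (forall e : R, 0 < e -> exists n0 : nat, forall m n : nat,
        (n0 <= m)%N -> (n0 <= n)%N -> ipnorm ip (u m - u n) < e) ->
    exists l : V, forall e : R, 0 < e -> exists n0 : nat, forall n : nat,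
        (n0 <= n)%N -> ipnorm ip (u n - l) < e.

Definition hilbert (V : lmodType C) (ip : V -> V -> C) :=
  is_inner_product ip /\ complete_for ip.

Definition bounded_op (V W : lmodType C) (ipV : V -> V -> C) (ipW : W -> W -> C)
  (T : V -> W) :=
  exists M : R, forall v, ipnorm ipW (T v) <= M * ipnorm ipV v.

Definition opnorm (V W : lmodType C) (ipV : V -> V -> C) (ipW : W -> W -> C)
  (T : V -> W) : R :=
  sup [set x : R | exists v : V, v <> 0 /\ x = ipnorm ipW (T v) / ipnorm ipV v].

Definition bounded_form (V : lmodType C) (ip : V -> V -> C) (s : V -> V -> C) :=
  exists M : R, forall u v, cmod (s u v) <= M * ipnorm ip u * ipnorm ip v.

(** The (anti)dual space H^* : bounded antilinear functionals, with dual norm *)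
Definition in_dual (V : lmodType C) (ip : V -> V -> C) (f : V -> C) :=
  is_antilinear_form f /\ exists M : R, forall v, cmod (f v) <= M * ipnorm ip v.

Definition dualnorm (V : lmodType C) (ip : V -> V -> C) (f : V -> C) : R :=
  sup [set x : R | exists v : V, v <> 0 /\ x = cmod (f v) / ipnorm ip v].

(* the operator A : H -> H^* associated with a form:  <A u, v> = a(u, v) *)
Definition opA (V : lmodType C) (a : V -> V -> C) (u : V) : V -> C := fun v => a u v.

Definition inv_opnorm (V : lmodType C) (ip : V -> V -> C) (Ainv : (V -> C) -> V) : R :=
  sup [set x : R | exists f : V -> C,
         [/\ in_dual ip f, f <> (fun _ => 0) &
             x = ipnorm ip (Ainv f) / dualnorm ip f]].

Definition aform (H H0 : lmodType C) (ip0 : H0 -> H0 -> C) (iota : H -> H0)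
  (DD : H -> H0) (b : H -> H -> C) (muinv eps : H0 -> H0) (u v : H) : C :=
  ip0 (muinv (DD u)) (DD v) + b u v - ip0 (eps (iota u)) (iota v).

(** Discrete notions: subspace H_N spanned by a basis phi : 'I_N -> H *)
Definition comb (V : lmodType C) (N : nat) (phi : 'I_N -> V) (X : 'cV[C]_N) : V :=
  \sum_(j < N) X j 0 *: phi j.

Definition lin_indep (V : lmodType C) (N : nat) (phi : 'I_N -> V) :=
  forall X : 'cV[C]_N, comb phi X = 0 -> X = 0.

Definition inspan (V : lmodType C) (N : nat) (phi : 'I_N -> V) (u : V) :=
  exists X : 'cV[C]_N, u = comb phi X.

Definition galerkin (V : lmodType C) (N : nat) (a : V -> V -> C) (phi : 'I_N -> V)
  : 'M[C]_N := \matrix_(i, j) a (phi j) (phi i).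

Definition infsup (V : lmodType C) (ip : V -> V -> C) (N : nat) (a : V -> V -> C)
  (phi : 'I_N -> V) : R :=
  inf [set x : R | exists u : V, [/\ inspan phi u, u <> 0 &
        x = sup [set y : R | exists v : V, [/\ inspan phi v, v <> 0 &
                   y = cmod (a u v) / (ipnorm ip u * ipnorm ip v)]]]].

Definition dot2 (N : nat) (X Y : 'cV[C]_N) : C := \sum_(i < N) X i 0 * conjc (Y i 0).

Definition vnorm2 (N : nat) (X : 'cV[C]_N) : R := Num.sqrt (complex.Re (dot2 X X)).

Definition vnormM (N : nat) (M : 'M[C]_N) (X : 'cV[C]_N) : R :=
  Num.sqrt (complex.Re (dot2 (M *m X) X)).

Definition mnorm (N : nat) (nrm : 'cV[C]_N -> R) (A : 'M[C]_N) : R :=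
  sup [set x : R | exists X : 'cV[C]_N, X <> 0 /\ x = nrm (A *m X) / nrm X].

Definition herm_posdef (N : nat) (M : 'M[C]_N) :=
  (forall i j, M i j = conjc (M j i)) /\
  (forall X : 'cV[C]_N, X <> 0 -> 0 < complex.Re (dot2 (M *m X) X)).

End Defs.

(* The forms a_1 and a_2 differ only through mu_1^-1 - mu_2^-1 and eps_1 - eps_2, so the
   Galerkin matrices satisfy |((A2 - A1) X, Y)_2| <= delta |X|_D |Y|_D with delta the sum of
   the two operator norms; since D^-1 defines the dual norm of |.|_D for the Euclidean pairing,
   this reads |(A2 - A1) X|_{D^-1} <= delta |X|_D. The discrete inf-sup condition gives
   |X|_D <= k |A1 X|_{D^-1} with k = C1 |A1^-1|, and when delta k <= 1/2 the triangle
   inequality upgrades it to |X|_D <= 2k |A2 X|_{D^-1}. Hence A2 is invertible, and both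
   estimates follow from I - A2^-1 A1 = A2^-1 (A2 - A1) and I - A1 A2^-1 = (A2 - A1) A2^-1.
   If mu_1 = mu_2, then a_2 - a_1 only involves H0-norms, which m_- and m_+ compare with
   the Euclidean norm. *)

From HB Require Import structures.
From mathcomp Require Import all_boot all_order all_algebra.
From mathcomp Require Import complex.
From mathcomp Require Import boolp classical_sets reals.
From mathcomp Require Import ring lra.
Set Implicit Arguments.
Unset Strict Implicit.
Unset Printing Implicit Defensive.
Import Order.TTheory GRing.Theory Num.Theory.
Local Open Scope ring_scope.
Local Open Scope classical_set_scope.

Section ComplexNumbers.
Variable R : realType.
Implicit Types (z w : R[i]) (r : R).

Lemma cmod_ge0 z : 0 <= cmod z.
Proof. by case: z => a b; apply: sqrtr_ge0. Qed.

Lemma cmod_eq0 z : cmod z = 0 -> z = 0.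
Proof. exact: ComplexField.Normc.eq0_normc. Qed.

Lemma cmod_gt0 z : z <> 0 -> 0 < cmod z.
Proof. by move=> nz; rewrite lt_def cmod_ge0 andbT; apply/eqP => /cmod_eq0. Qed.

Lemma cmodD z w : cmod (z + w) <= cmod z + cmod w.
Proof. exact: le_normcD. Qed.

Lemma cmodB z w : cmod (z - w) <= cmod z + cmod w.
Proof. by apply: le_trans (cmodD _ _) _; rewrite /cmod normcN. Qed.

Lemma cmod_real r : 0 <= r -> cmod r%:C%C = r.
Proof. by move=> r0; rewrite /cmod /= expr0n /= addr0 sqrtr_sqr ger0_norm. Qed.

Lemma Re_le_cmod z : complex.Re z <= cmod z.
Proof.
case: z => a b /=; apply: le_trans (ler_norm a) _.
by rewrite -sqrtr_sqr ler_wsqrtr // lerDl sqr_ge0.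
Qed.

Lemma mulcJ z : z * conjc z = (cmod z ^+ 2)%:C%C.
Proof.
case: z => a b; rewrite /cmod /= sqr_sqrtr ?addr_ge0 ?sqr_ge0 //.
by rewrite /conjc; simpc; rewrite /= !expr2; congr (_ +i* _)%C; ring.
Qed.

Lemma selfconj_real z : z = conjc z -> z = (complex.Re z)%:C%C.
Proof.
by case: z => a b [] /eqP; rewrite -subr_eq0 opprK -mulr2n mulrn_eq0 /= => /eqP ->.
Qed.

Lemma ReD z w : complex.Re (z + w) = complex.Re z + complex.Re w.
Proof. by case: z; case: w. Qed.

Lemma ReJ z : complex.Re (conjc z) = complex.Re z.
Proof. by case: z. Qed.

Lemma Re_sum n (F : 'I_n -> R[i]) :
  complex.Re (\sum_(i < n) F i) = \sum_(i < n) complex.Re (F i).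
Proof. by elim/big_rec2: _ => //= i x y _ <-; rewrite ReD. Qed.

End ComplexNumbers.

Section LinearMaps.
Variable R : realType.
Local Notation C := R[i].
Variables (V W : lmodType C).

Lemma lin0 (f : V -> W) : is_linear f -> f 0 = 0.
Proof.
move=> hf; apply: (addrI (f 0)); rewrite addr0.
by have := hf 1 0 0; rewrite scaler0 addr0 scale1r.
Qed.

Lemma linB (f g : V -> W) : is_linear f -> is_linear g -> is_linear (fun v => f v - g v).
Proof. by move=> hf hg a u v; rewrite hf hg scalerBr opprD addrACA. Qed.

Section LinearForm.
Variable f : V -> C.
Hypothesis hf : is_linear_form f.

Lemma lform0 : f 0 = 0.
Proof.
apply: (addrI (f 0)); rewrite addr0.
by have := hf 1 0 0; rewrite scaler0 addr0 mul1r.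
Qed.

Lemma lformD u v : f (u + v) = f u + f v.
Proof. by rewrite -[u in LHS]scale1r hf mul1r. Qed.

Lemma lformZ a u : f (a *: u) = a * f u.
Proof. by rewrite -[a *: u]addr0 hf lform0 addr0. Qed.

Lemma lformB u v : f (u - v) = f u - f v.
Proof. by rewrite lformD -scaleN1r lformZ mulN1r. Qed.

Lemma lform_sum n (F : 'I_n -> V) : f (\sum_(i < n) F i) = \sum_(i < n) f (F i).
Proof. exact: (big_morph f lformD lform0). Qed.

End LinearForm.

Section AntilinearForm.
Variable f : V -> C.
Hypothesis hf : is_antilinear_form f.

Lemma alform0 : f 0 = 0.
Proof.
apply: (addrI (f 0)); rewrite addr0.
by have := hf 1 0 0; rewrite scaler0 addr0 rmorph1 mul1r.
Qed.

Lemma alformD u v : f (u + v) = f u + f v.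
Proof. by rewrite -[u in LHS]scale1r hf rmorph1 mul1r. Qed.

Lemma alformZ a u : f (a *: u) = conjc a * f u.
Proof. by rewrite -[a *: u]addr0 hf alform0 addr0. Qed.

Lemma alform_sum n (F : 'I_n -> V) : f (\sum_(i < n) F i) = \sum_(i < n) f (F i).
Proof. exact: (big_morph f alformD alform0). Qed.

End AntilinearForm.
End LinearMaps.

Section InnerProduct.
Variable R : realType.
Local Notation C := R[i].
Variables (V : lmodType C) (s : V -> V -> C).
Hypothesis hs : is_inner_product s.
Local Notation "`| v |_s" := (ipnorm s v) (format "`| v |_s").

Lemma ip_linl v : is_linear_form (s^~ v).
Proof. by case: hs. Qed.

Lemma ipC u v : s v u = conjc (s u v).
Proof. by case: hs. Qed.

Lemma ip_antilinr u : is_antilinear_form (s u).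
Proof. by move=> a v w; rewrite ipC (ip_linl u) rmorphD rmorphM /= -!ipC. Qed.

Lemma ip0l u : s 0 u = 0.
Proof. exact: lform0 (ip_linl u). Qed.

Lemma ipvv v : s v v = (complex.Re (s v v))%:C%C.
Proof. exact/selfconj_real/ipC. Qed.

Lemma ipRe_ge0 v : 0 <= complex.Re (s v v).
Proof. by case: hs. Qed.

Lemma ipnorm_ge0 v : 0 <= `|v|_s.
Proof. exact: sqrtr_ge0. Qed.

Lemma ipnorm_sqr v : `|v|_s ^+ 2 = complex.Re (s v v).
Proof. by rewrite sqr_sqrtr // ipRe_ge0. Qed.

Lemma ipnorm0 : `|0|_s = 0.
Proof. by rewrite /ipnorm ip0l sqrtr0. Qed.

Lemma ipnorm_gt0 v : v <> 0 -> 0 < `|v|_s.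
Proof.
move=> nv; rewrite sqrtr_gt0 lt_def ipRe_ge0 andbT; apply/eqP => h.
by apply: nv; case: hs => _ _ _; apply; rewrite ipvv h.
Qed.

(* Expand [0 <= s w w] for [w = r u - c v], where [r = s v v] and [c = s u v]. *)
Lemma Cauchy_Schwarz u v : cmod (s u v) <= `|u|_s * `|v|_s.
Proof.
have [->|nv] := eqVneq v 0.
  by rewrite ipnorm0 mulr0 ipC ip0l rmorph0 cmod_real.
have r_gt0 : 0 < complex.Re (s v v) by rewrite -ipnorm_sqr exprn_gt0 // ipnorm_gt0 //; apply/eqP.
set r := complex.Re (s v v) in r_gt0 *; set p := complex.Re (s u u); set c := s u v.
have := ipRe_ge0 (r%:C%C *: u + (- c) *: v).
rewrite (ip_linl _) (lformZ (ip_linl _)).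
rewrite !(alformD (ip_antilinr _)) !(alformZ (ip_antilinr _)) (ipvv u) (ipvv v) -/r -/p.
rewrite (ipC u v) -/c conjc_real raddfN /=.
have -> : r%:C%C * (r%:C%C * p%:C%C + - c^*%C * c) + - c * (r%:C%C * c^*%C + - c^*%C * r%:C%C)
    = (r * (r * p - cmod c ^+ 2))%:C%C.
  by rewrite rmorphM rmorphB rmorphM /= -mulcJ; ring.
rewrite /= pmulr_rge0 // subr_ge0 => hc.
rewrite /ipnorm -/r -/p -sqrtrM ?ipRe_ge0 // -[cmod c]ger0_norm ?cmod_ge0 //.
by rewrite -sqrtr_sqr ler_wsqrtr // mulrC.
Qed.

Lemma ipnormD u v : `|u + v|_s <= `|u|_s + `|v|_s.
Proof.
rewrite -[_ + `|v|_s]ger0_norm ?addr_ge0 ?ipnorm_ge0 // -sqrtr_sqr /ipnorm ler_wsqrtr //.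
rewrite (lformD (ip_linl _)) !(alformD (ip_antilinr _)) !ReD (ipC u v) ReJ.
rewrite sqrrD -!/(ipnorm s _) !ipnorm_sqr mulr2n.
by have := Re_le_cmod (s u v); have := Cauchy_Schwarz u v; lra.
Qed.

Lemma ipnormB u v : `|u - v|_s <= `|u|_s + `|v|_s.
Proof.
suff normN : `|- v|_s = `|v|_s by rewrite -normN ipnormD.
by rewrite /ipnorm -scaleN1r (lformZ (ip_linl _)) (alformZ (ip_antilinr _)) rmorphN1 !mulN1r opprK.
Qed.

Lemma ipnorm_le_dual w c :
  0 <= c -> (forall y, cmod (s w y) <= c * `|y|_s) -> `|w|_s <= c.
Proof.
move=> c0 h; have w0 := ipnorm_ge0 w.
have : `|w|_s ^+ 2 <= c * `|w|_s.
  by rewrite ipnorm_sqr -(cmod_real (ipRe_ge0 w)) -ipvv.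
by rewrite expr2; nra.
Qed.

End InnerProduct.

Section Suprema.
Variable R : realType.

Lemma sup_ge0 (E : set R) : (forall x, E x -> 0 <= x) -> 0 <= sup E.
Proof.
move=> E_ge0; have [supE|noSup] := pselect (has_sup E); last by rewrite sup_out.
have [x Ex] := supE.1; apply: le_trans (E_ge0 x Ex) _.
exact: ub_le_sup supE.2 _ Ex.
Qed.

Lemma ratio_le_sup T (P : T -> Prop) (f g : T -> R) (M : R) (v : T) :
  (forall w, P w -> 0 < g w) -> (forall w, P w -> f w <= M * g w) -> P v ->
  f v / g v <= sup [set x | exists w, P w /\ x = f w / g w].
Proof.
move=> g_gt0 fM Pv; apply: ub_le_sup; last by exists v.
by exists M => _ [w [Pw ->]]; rewrite ler_pdivrMr ?g_gt0 ?fM.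
Qed.

Lemma sup_ratio_le T (P : T -> Prop) (f g : T -> R) (c : R) :
  (exists v, P v) -> (forall w, P w -> 0 < g w) -> (forall w, P w -> f w <= c * g w) ->
  sup [set x | exists w, P w /\ x = f w / g w] <= c.
Proof.
move=> [v Pv] g_gt0 fc; apply: ge_sup; first by exists (f v / g v), v.
by move=> _ [w [Pw ->]]; rewrite ler_pdivrMr ?g_gt0 ?fc.
Qed.

End Suprema.

Section OperatorNorms.
Variable R : realType.
Local Notation C := R[i].
Variables (V W : lmodType C) (ipV : V -> V -> C) (ipW : W -> W -> C).
Hypotheses (hipV : is_inner_product ipV) (hipW : is_inner_product ipW).

Lemma opnorm_ge0 (T : V -> W) : 0 <= opnorm ipV ipW T.
Proof. by apply: sup_ge0 => _ [v [_ ->]]; apply: divr_ge0; apply: sqrtr_ge0. Qed.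

Lemma opnormP (T : V -> W) : is_linear T -> bounded_op ipV ipW T ->
  forall v, ipnorm ipW (T v) <= opnorm ipV ipW T * ipnorm ipV v.
Proof.
move=> linT [M TM] v; have [->|nv] := eqVneq v 0.
  by rewrite (lin0 linT) !ipnorm0 ?mulr0.
rewrite -ler_pdivrMr ?ipnorm_gt0 //; last exact/eqP.
apply: (@ratio_le_sup _ _ (fun w => w <> 0) (fun w => ipnorm ipW (T w)) _ M) => //.
  exact: ipnorm_gt0.
exact/eqP.
Qed.

End OperatorNorms.

Lemma opnormBP (R : realType) (V : lmodType R[i]) (s : V -> V -> R[i]) (T1 T2 : V -> V) :
  is_inner_product s -> is_linear T1 -> is_linear T2 ->
  bounded_op s s T1 -> bounded_op s s T2 ->
  forall x, ipnorm s (T1 x - T2 x) <= opnorm s s (fun v => T1 v - T2 v) * ipnorm s x.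
Proof.
move=> hs T1_lin T2_lin [M1 T1M] [M2 T2M].
have T12_bd : bounded_op s s (fun v => T1 v - T2 v).
  by exists (M1 + M2) => v; apply: le_trans (ipnormB hs _ _) _; rewrite mulrDl lerD.
exact: (opnormP hs hs (linB T1_lin T2_lin) T12_bd).
Qed.

Lemma unitmx_of_ker0 (F : fieldType) n (A : 'M[F]_n) :
  (forall X : 'cV[F]_n, A *m X = 0 -> X = 0) -> A \in unitmx.
Proof.
move=> kerA; rewrite unitmxE unitfE -det_tr; apply/negP => /det0P [v nv vA].
have /kerA/(congr1 trmx) : A *m v^T = 0 by rewrite -[A]trmxK -trmx_mul vA trmx0.
by rewrite trmxK trmx0 => v0; rewrite v0 eqxx in nv.
Qed.

Section MatrixInnerProducts.
Variables (R : realType) (n : nat).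
Local Notation C := R[i].
Implicit Types (M D : 'M[C]_n) (X Y Z W : 'cV[C]_n).

Lemma dot2C X Y : dot2 Y X = conjc (dot2 X Y).
Proof.
by rewrite /dot2 rmorph_sum; apply: eq_bigr => i _; rewrite rmorphM /= conjcK mulrC.
Qed.

Lemma dot2B X Y Z : dot2 (X - Y) Z = dot2 X Z - dot2 Y Z.
Proof. by rewrite /dot2 -sumrB; apply: eq_bigr => i _; rewrite !mxE mulrBl. Qed.

Lemma dot2_mulmx_linl M Y : is_linear_form (fun X => dot2 (M *m X) Y).
Proof.
move=> a X Z; rewrite /dot2 mulmxDr -scalemxAr mulr_sumr -big_split /=.
by apply: eq_bigr => i _; rewrite !mxE; ring.
Qed.

Lemma dot2_herm M X Y :
  (forall i j, M i j = conjc (M j i)) -> dot2 (M *m X) Y = dot2 X (M *m Y).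
Proof.
move=> hM; rewrite /dot2; under eq_bigr => i _ do rewrite mxE mulr_suml.
rewrite exchange_big /=; apply: eq_bigr => j _.
rewrite mxE rmorph_sum mulr_sumr; apply: eq_bigr => i _.
by rewrite rmorphM /= -hM; ring.
Qed.

Section PositiveDefinite.
Variable D : 'M[C]_n.
Hypothesis hD : herm_posdef D.

Lemma herm_posdef_unit : D \in unitmx.
Proof.
case: hD => _ posD; apply: unitmx_of_ker0 => X DX0; apply: contrapT => nX.
have := posD X nX; rewrite DX0 /dot2 big1 ?ltxx // => i _.
by rewrite mxE mul0r.
Qed.

Lemma herm_posdef_ip : is_inner_product (fun X Y => dot2 (D *m X) Y).
Proof.
case: hD => hermD posD; split.
- exact: dot2_mulmx_linl.
- by move=> X Y; rewrite dot2_herm // dot2C.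
- move=> X; have [->|nX] := eqVneq X 0; last exact/ltW/posD/eqP.
  by rewrite mulmx0 /dot2 big1 // => i _; rewrite mxE mul0r.
- move=> X DX0; apply: contrapT => nX.
  by have := posD X nX; rewrite DX0 ltxx.
Qed.

Lemma invmx_herm_dot2 X Y : dot2 (invmx D *m X) Y = dot2 X (invmx D *m Y).
Proof.
have uD := herm_posdef_unit.
rewrite -[Y in LHS](mulKVmx uD) -(dot2_herm _ _ hD.1) mulKVmx //.
Qed.

Lemma vnormM_invmx W : vnormM D (invmx D *m W) = vnormM (invmx D) W.
Proof. by rewrite /vnormM mulKVmx ?herm_posdef_unit // dot2C ReJ. Qed.

Lemma herm_posdef_invmx_ip : is_inner_product (fun X Y => dot2 (invmx D *m X) Y).
Proof.
have uD := herm_posdef_unit; have ipD := herm_posdef_ip.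
have vvE X : dot2 (invmx D *m X) X = dot2 (D *m (invmx D *m X)) (invmx D *m X).
  by rewrite mulKVmx // invmx_herm_dot2.
split.
- exact: dot2_mulmx_linl.
- by move=> X Y; rewrite invmx_herm_dot2 dot2C.
- by move=> X; rewrite vvE; apply: ipRe_ge0 ipD _.
- case: ipD => _ _ _ ipD0 X; rewrite vvE => /ipD0 /(congr1 (mulmx D)).
  by rewrite mulKVmx // mulmx0.
Qed.

Lemma vnormM_gt0 X : X <> 0 -> 0 < vnormM D X.
Proof. by move=> X_nz; have := ipnorm_gt0 herm_posdef_ip X_nz. Qed.

Lemma vnormM_invmx_gt0 X : X <> 0 -> 0 < vnormM (invmx D) X.
Proof. by move=> X_nz; have := ipnorm_gt0 herm_posdef_invmx_ip X_nz. Qed.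

Lemma dot2_le_vnormM W Y : cmod (dot2 W Y) <= vnormM (invmx D) W * vnormM D Y.
Proof.
rewrite -{1}[W](mulKVmx herm_posdef_unit) -vnormM_invmx.
exact: Cauchy_Schwarz herm_posdef_ip _ _.
Qed.

Lemma vnormM_invmx_le_dual W c :
  0 <= c -> (forall Y, cmod (dot2 W Y) <= c * vnormM D Y) -> vnormM (invmx D) W <= c.
Proof.
move=> c0 Wc; apply: (ipnorm_le_dual herm_posdef_invmx_ip) => // Y.
rewrite invmx_herm_dot2 -[ipnorm _ Y]/(vnormM (invmx D) Y) -vnormM_invmx; exact: Wc.
Qed.

End PositiveDefinite.

Lemma herm_posdef1 : herm_posdef (1%:M : 'M[C]_n).
Proof.
split=> [i j|X nX]; first by rewrite !mxE eq_sym conjc_nat.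
have [i Xi] : exists i, X i 0 != 0.
  apply: contrapT => nXi; apply: nX; apply/matrixP => i j; rewrite (ord1 j) mxE.
  by apply/eqP; apply: contrapT => Xi; apply: nXi; exists i; apply/negP.
rewrite mul1mx /dot2 Re_sum (bigD1 i) //= ltr_pwDl //.
  by rewrite mulcJ /= exprn_gt0 // cmod_gt0 //; apply/eqP.
by apply: sumr_ge0 => j _; rewrite mulcJ /= sqr_ge0.
Qed.

Lemma dot2_ip : is_inner_product (@dot2 R n).
Proof.
have := herm_posdef_ip herm_posdef1.
by congr is_inner_product; apply: funext => X; apply: funext => Y; rewrite mul1mx.
Qed.

Lemma vnormM_invmx_le_vnorm2 D m W : herm_posdef D -> 0 < m ->
  (forall Y, m * vnorm2 Y <= vnormM D Y) -> vnormM (invmx D) W <= vnorm2 W / m.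
Proof.
move=> hD m_gt0 mD; apply: vnormM_invmx_le_dual => // [|Y].
  by rewrite divr_ge0 ?sqrtr_ge0 ?ltW.
apply: le_trans (Cauchy_Schwarz dot2_ip W Y) _.
by rewrite -mulrA ler_wpM2l ?sqrtr_ge0 // mulrC ler_pdivlMr // mulrC mD.
Qed.

Lemma const_mx1_neq0 : (0 < n)%N -> const_mx 1 <> 0 :> 'cV[C]_n.
Proof. by move=> n_gt0 /matrixP /(_ (Ordinal n_gt0) 0) /eqP; rewrite !mxE oner_eq0. Qed.

Lemma mnorm_le (nrm : 'cV[C]_n -> R) A c : (0 < n)%N ->
  (forall X, X <> 0 -> 0 < nrm X) -> (forall X, X <> 0 -> nrm (A *m X) <= c * nrm X) ->
  mnorm nrm A <= c.
Proof.
move=> n_gt0 nrm_gt0 Ac; apply: sup_ratio_le => //.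
by exists (const_mx 1); apply: const_mx1_neq0.
Qed.

Lemma mnorm_mulmx_le (nrm1 nrm2 : 'cV[C]_n -> R) A B a b : (0 < n)%N ->
  (forall X, X <> 0 -> 0 < nrm1 X) -> 0 <= a ->
  (forall X, nrm1 (A *m X) <= a * nrm2 X) -> (forall X, nrm2 (B *m X) <= b * nrm1 X) ->
  mnorm nrm1 (A *m B) <= a * b.
Proof.
move=> n_gt0 nrm1_gt0 a0 Aa Bb; apply: mnorm_le => // X _.
by rewrite -mulmxA -mulrA; apply: le_trans (Aa _) _; rewrite ler_wpM2l.
Qed.

End MatrixInnerProducts.

Lemma subr_invmx_mull (F : fieldType) n (A B : 'M[F]_n) : A \in unitmx ->
  1%:M - invmx A *m B = invmx A *m (A - B).
Proof. by move=> uA; rewrite mulmxBr mulVmx. Qed.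

Lemma subr_invmx_mulr (F : fieldType) n (A B : 'M[F]_n) : A \in unitmx ->
  1%:M - B *m invmx A = (A - B) *m invmx A.
Proof. by move=> uA; rewrite mulmxBl mulmxV. Qed.

Section GalerkinPerturbation.
Variables (R : realType) (n : nat).
Local Notation C := R[i].
Implicit Types X Z W : 'cV[C]_n.
Variables (nX nY : 'cV[C]_n -> R) (A1 A2 : 'M[C]_n) (k d : R).
Hypotheses (nX_ge0 : forall X, 0 <= nX X) (nX_gt0 : forall X, X <> 0 -> 0 < nX X).
Hypothesis nY_gt0 : forall Z, Z <> 0 -> 0 < nY Z.
Hypotheses (nY0 : nY 0 = 0) (nYB : forall Z W, nY (Z - W) <= nY Z + nY W).
Hypotheses (k_gt0 : 0 < k) (d_ge0 : 0 <= d) (dk_le : d * k <= 1 / 2).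
Hypothesis A1_stable : forall X, nX X <= k * nY (A1 *m X).
Hypothesis A21_le : forall X, nY ((A2 - A1) *m X) <= d * nX X.

Lemma perturbed_stable X : nX X <= 2 * k * nY (A2 *m X).
Proof.
have A1E : A1 *m X = A2 *m X - (A2 - A1) *m X by rewrite mulmxBl opprB addrCA subrr addr0.
have le_A1 : nY (A1 *m X) <= nY (A2 *m X) + d * nX X.
  by rewrite A1E; apply: le_trans (nYB _ _) _; rewrite lerD2l.
have le_X : nX X <= k * nY (A2 *m X) + d * k * nX X.
  by apply: le_trans (A1_stable X) _; rewrite [d * k]mulrC -mulrA -mulrDr ler_pM2l.
have := ler_wpM2r (nX_ge0 X) dk_le; lra.
Qed.

Lemma perturbed_unit : A2 \in unitmx.
Proof.
apply: unitmx_of_ker0 => X A2X0; apply: contrapT => nX0.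
by have := perturbed_stable X; rewrite A2X0 nY0 mulr0 leNgt nX_gt0.
Qed.

Lemma invmx_perturbed_le Z : nX (invmx A2 *m Z) <= 2 * k * nY Z.
Proof. by have := perturbed_stable (invmx A2 *m Z); rewrite mulKVmx ?perturbed_unit. Qed.

Lemma mnorm_subr_invmx_mull : (0 < n)%N -> mnorm nX (1%:M - invmx A2 *m A1) <= 2 * d * k.
Proof.
move=> n_gt0; rewrite subr_invmx_mull ?perturbed_unit // mulrAC.
apply: (@mnorm_mulmx_le _ _ nX nY) => //.
- by rewrite mulr_ge0 ?ltW.
- exact: invmx_perturbed_le.
Qed.

Lemma mnorm_subr_invmx_mulr : (0 < n)%N -> mnorm nY (1%:M - A1 *m invmx A2) <= 2 * d * k.
Proof.
move=> n_gt0; rewrite subr_invmx_mulr ?perturbed_unit // -mulrA mulrCA.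
apply: (@mnorm_mulmx_le _ _ nY nX) => //; exact: invmx_perturbed_le.
Qed.

End GalerkinPerturbation.

Lemma vnormM_perturbation (R : realType) n (D A1 A2 : 'M[R[i]]_n) k d : (0 < n)%N ->
  herm_posdef D -> 0 < k -> 0 <= d -> d * k <= 1 / 2 ->
  (forall X, vnormM D X <= k * vnormM (invmx D) (A1 *m X)) ->
  (forall X, vnormM (invmx D) ((A2 - A1) *m X) <= d * vnormM D X) ->
  [/\ A2 \in unitmx,
      forall Z, vnormM D (invmx A2 *m Z) <= 2 * k * vnormM (invmx D) Z
    & Num.max (mnorm (vnormM D) (1%:M - invmx A2 *m A1))
              (mnorm (vnormM (invmx D)) (1%:M - A1 *m invmx A2)) <= 2 * d * k].
Proof.
move=> n_gt0 hD k_gt0 d_ge0 dk_le A1_stable A21_le.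
have nD_ge0 X : 0 <= vnormM D X by apply: sqrtr_ge0.
have nDi0 : vnormM (invmx D) 0 = 0 := ipnorm0 (herm_posdef_invmx_ip hD).
have nDiB Z W : vnormM (invmx D) (Z - W) <= vnormM (invmx D) Z + vnormM (invmx D) W.
  exact: (ipnormB (herm_posdef_invmx_ip hD)).
have nD_gt0 := vnormM_gt0 hD; have nDi_gt0 := vnormM_invmx_gt0 hD.
split.
- exact: (perturbed_unit nD_ge0 nD_gt0 nDi0 nDiB k_gt0 dk_le A1_stable A21_le).
- exact: (invmx_perturbed_le nD_ge0 nD_gt0 nDi0 nDiB k_gt0 dk_le A1_stable A21_le).
- rewrite ge_max; apply/andP; split.
    exact: (mnorm_subr_invmx_mull nD_ge0 nD_gt0 nDi0 nDiB k_gt0 dk_le A1_stable A21_le).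
  exact: (mnorm_subr_invmx_mulr nD_ge0 nD_gt0 nDi_gt0 nDi0 nDiB k_gt0 d_ge0 dk_le A1_stable A21_le).
Qed.

(* [q X] stands for the [H0]-norm of the discrete function with coefficients [X]. *)
Section EuclideanEstimates.
Variables (R : realType) (n : nat).
Local Notation C := R[i].
Implicit Types X Y Z U W : 'cV[C]_n.
Variables (D A1 A2 : 'M[C]_n) (q : 'cV[C]_n -> R) (kappa delta m_minus m_plus : R).
Hypotheses (hD : herm_posdef D) (A2_unit : A2 \in unitmx).
Hypotheses (kappa_ge0 : 0 <= kappa) (delta_ge0 : 0 <= delta).
Hypotheses (m_minus_gt0 : 0 < m_minus) (m_plus_gt0 : 0 < m_plus).
Hypothesis invmxA2_le : forall Z, vnormM D (invmx A2 *m Z) <= kappa * vnormM (invmx D) Z.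
Hypothesis q_vnorm2 : forall X, m_minus * vnorm2 X <= q X <= m_plus * vnorm2 X.
Hypothesis q_le_vnormM : forall X, q X <= vnormM D X.
Hypothesis A21_dot2_le :
  forall X Y, cmod (dot2 ((A2 - A1) *m X) Y) <= delta * q X * q Y.

Let m_plus_ge0 : 0 <= m_plus. Proof. exact: ltW. Qed.

Let q_ge0 X : 0 <= q X.
Proof.
have /andP[le_mq _] := q_vnorm2 X.
by apply: le_trans _ le_mq; rewrite mulr_ge0 ?sqrtr_ge0 ?ltW.
Qed.

Let vnorm2_le_vnormM X : m_minus * vnorm2 X <= vnormM D X.
Proof. by have /andP[le_mq _] := q_vnorm2 X; apply: le_trans le_mq (q_le_vnormM X). Qed.

Let vnorm2_gt0 X : X <> 0 -> 0 < vnorm2 X.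
Proof. by move=> X_nz; have := ipnorm_gt0 (@dot2_ip R n) X_nz. Qed.

Lemma vnorm2_invmx_perturbed_le Z :
  vnorm2 (invmx A2 *m Z) <= kappa / m_minus * vnormM (invmx D) Z.
Proof.
rewrite mulrAC ler_pdivlMr // mulrC.
by apply: le_trans (vnorm2_le_vnormM _) (invmxA2_le _).
Qed.

Lemma vnormM_invmx_A21_le W : vnormM (invmx D) ((A2 - A1) *m W) <= delta * m_plus * vnorm2 W.
Proof.
have /andP[_ q_le] := q_vnorm2 W.
apply: vnormM_invmx_le_dual => // [|Y]; first by rewrite !mulr_ge0 ?sqrtr_ge0.
apply: le_trans (A21_dot2_le _ _) _.
apply: ler_pM; [by rewrite mulr_ge0 | exact: q_ge0 | by rewrite -mulrA ler_wpM2l |].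
exact: q_le_vnormM.
Qed.

Lemma vnorm2_A21_le U : vnorm2 ((A2 - A1) *m U) <= delta * m_plus * vnormM D U.
Proof.
apply: (ipnorm_le_dual (@dot2_ip R n)) => [|Y]; first by rewrite !mulr_ge0 ?sqrtr_ge0.
apply: le_trans (A21_dot2_le _ _) _.
have /andP[_ q_le] := q_vnorm2 Y.
rewrite (mulrAC delta m_plus) -[X in _ <= X]mulrA.
apply: ler_pM; [by rewrite mulr_ge0 | exact: q_ge0 | by rewrite ler_wpM2l |].
exact: q_le.
Qed.

Lemma mnorm2_subr_invmx_mull : (0 < n)%N ->
  mnorm (@vnorm2 R n) (1%:M - invmx A2 *m A1) <= kappa / m_minus * (delta * m_plus).
Proof.
move=> n_gt0; rewrite subr_invmx_mull //.
apply: (@mnorm_mulmx_le _ _ _ (vnormM (invmx D))) => //.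
- exact: divr_ge0 kappa_ge0 (ltW m_minus_gt0).
- exact: vnorm2_invmx_perturbed_le.
- exact: vnormM_invmx_A21_le.
Qed.

Lemma mnorm2_subr_invmx_mulr : (0 < n)%N ->
  mnorm (@vnorm2 R n) (1%:M - A1 *m invmx A2) <= delta * m_plus * (kappa / m_minus).
Proof.
move=> n_gt0; rewrite subr_invmx_mulr //; apply: (@mnorm_mulmx_le _ _ _ (vnormM D)) => //.
- exact: mulr_ge0 delta_ge0 m_plus_ge0.
- exact: vnorm2_A21_le.
- move=> Z; apply: le_trans (invmxA2_le Z) _.
  rewrite -mulrA ler_wpM2l // mulrC; exact: vnormM_invmx_le_vnorm2.
Qed.

Lemma mnorm2_subr_invmx_le : (0 < n)%N ->
  Num.max (mnorm (@vnorm2 R n) (1%:M - invmx A2 *m A1))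
          (mnorm (@vnorm2 R n) (1%:M - A1 *m invmx A2)) <= kappa / m_minus * (delta * m_plus).
Proof.
move=> n_gt0; rewrite ge_max; apply/andP; split; first exact: mnorm2_subr_invmx_mull.
by rewrite [X in _ <= X]mulrC; apply: mnorm2_subr_invmx_mulr.
Qed.

End EuclideanEstimates.

Section DualNorm.
Variable R : realType.
Local Notation C := R[i].
Variables (V : lmodType C) (ip : V -> V -> C).
Hypothesis hip : is_inner_product ip.

Lemma dualnorm_ge0 f : 0 <= dualnorm ip f.
Proof. by apply: sup_ge0 => _ [v [_ ->]]; rewrite divr_ge0 ?cmod_ge0 ?sqrtr_ge0. Qed.

Lemma dualnorm_gt0 f : in_dual ip f -> f <> (fun _ => 0) -> 0 < dualnorm ip f.
Proof.
move=> [antilin [M fM]] f_nz.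
have [v fv_nz] : exists v, f v <> 0.
  by apply: contrapT => f0; apply: f_nz; apply: funext => v; apply: contrapT => fv; apply: f0; exists v.
have v_nz : v <> 0 by move=> v0; apply: fv_nz; rewrite v0 alform0.
apply: lt_le_trans (ratio_le_sup (P := fun w => w <> 0) _ (fun w _ => fM w) v_nz).
  by rewrite divr_gt0 ?cmod_gt0 ?ipnorm_gt0.
exact: ipnorm_gt0.
Qed.

Lemma opA_in_dual a u : is_sesquilinear a -> bounded_form ip a -> in_dual ip (opA a u).
Proof. by move=> [_ antilin] [M aM]; split; [exact: antilin | exists (M * ipnorm ip u)]. Qed.

(* The witness is [f = opA a u], whose ratio is [|u| / |f|_*] since [Ainv f = u]. *)
Lemma inv_opnorm_gt0 a Ainv (u : V) : is_sesquilinear a -> bounded_form ip a ->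
  (forall w, Ainv (opA a w) = w) ->
  (exists M, forall f, in_dual ip f -> ipnorm ip (Ainv f) <= M * dualnorm ip f) ->
  u <> 0 -> 0 < inv_opnorm ip Ainv.
Proof.
move=> a_ses a_bd AinvK [M AinvM] u_nz.
have fu_dual := opA_in_dual u a_ses a_bd.
have fu_nz : opA a u <> (fun _ => 0).
  move=> fu0; apply: u_nz; rewrite -[u]AinvK fu0 -(AinvK 0); congr Ainv.
  by apply: funext => v; rewrite /opA (lform0 (a_ses.1 v)).
have dual_gt0 := dualnorm_gt0 fu_dual fu_nz.
have ub : has_ubound [set x : R | exists f, [/\ in_dual ip f, f <> (fun _ => 0) &
                        x = ipnorm ip (Ainv f) / dualnorm ip f]].
  exists `|M| => _ [f [f_dual f_nz ->]].
  rewrite ler_pdivrMr ?dualnorm_gt0 //; apply: le_trans (AinvM f f_dual) _.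
  by rewrite ler_wpM2r ?dualnorm_ge0 ?ler_norm.
apply: lt_le_trans (ub_le_sup ub _); last by exists (opA a u); rewrite AinvK.
by rewrite divr_gt0 ?ipnorm_gt0.
Qed.

End DualNorm.

Section Galerkin.
Variable R : realType.
Local Notation C := R[i].
Variables (V : lmodType C) (N : nat) (phi : 'I_N -> V).
Implicit Types (a : V -> V -> C) (X Y : 'cV[C]_N).

Lemma galerkinE a X Y :
  is_sesquilinear a -> a (comb phi X) (comb phi Y) = dot2 (galerkin a phi *m X) Y.
Proof.
move=> [lin antilin]; rewrite /comb /dot2 (lform_sum (lin _)).
under eq_bigr => j _ do rewrite (lformZ (lin _)) (alform_sum (antilin _)) mulr_sumr.
rewrite exchange_big /=; apply: eq_bigr => i _.
rewrite !mxE mulr_suml; apply: eq_bigr => j _.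
by rewrite (alformZ (antilin _)) !mxE; ring.
Qed.

Lemma galerkin_subE a1 a2 X Y : is_sesquilinear a1 -> is_sesquilinear a2 ->
  dot2 ((galerkin a2 phi - galerkin a1 phi) *m X) Y =
  a2 (comb phi X) (comb phi Y) - a1 (comb phi X) (comb phi Y).
Proof. by move=> a1_ses a2_ses; rewrite mulmxBl dot2B !galerkinE. Qed.

Lemma comb_neq0 (ip : V -> V -> C) (D : 'M[C]_N) X :
  is_inner_product ip -> herm_posdef D -> (forall X, ipnorm ip (comb phi X) = vnormM D X) ->
  X <> 0 -> comb phi X <> 0.
Proof.
move=> hip hD combE X_nz X0.
by have := vnormM_gt0 hD X_nz; rewrite -combE X0 ipnorm0 ?ltxx.
Qed.

Lemma infsup_galerkin_stable (ip : V -> V -> C) a (D : 'M[C]_N) k :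
  is_inner_product ip -> is_sesquilinear a -> herm_posdef D ->
  (forall X, ipnorm ip (comb phi X) = vnormM D X) ->
  0 < k -> 1 / k <= infsup ip a phi ->
  forall X, vnormM D X <= k * vnormM (invmx D) (galerkin a phi *m X).
Proof.
move=> hip a_ses hD combE k_gt0 infsup_ge X.
have nD_gt0 := vnormM_gt0 hD.
have [->|/eqP X_nz] := eqVneq X 0.
  by rewrite [vnormM D 0](ipnorm0 (herm_posdef_ip hD)) mulr_ge0 ?sqrtr_ge0 ?ltW.
set u := comb phi X; set G := vnormM (invmx D) (galerkin a phi *m X).
have u_nz : u <> 0 := comb_neq0 hip hD combE X_nz.
set ratios := fun u => [set y : R | exists v, [/\ inspan phi v, v <> 0 &
                 y = cmod (a u v) / (ipnorm ip u * ipnorm ip v)]].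
have nX_gt0 := nD_gt0 X X_nz.
have ratios_le : sup (ratios u) <= G / vnormM D X.
  apply: ge_sup => [|_ [v [[Y ->] v_nz ->]]].
    by exists (cmod (a u u) / (ipnorm ip u * ipnorm ip u)), u; split => //; exists X.
  have nY_gt0 : 0 < vnormM D Y by rewrite -combE; exact: (ipnorm_gt0 hip v_nz).
  rewrite /u !combE galerkinE // ler_pdivrMr ?mulr_gt0 // mulrA divfK ?gt_eqF //.
  exact: dot2_le_vnormM.
have infsup_le : infsup ip a phi <= sup (ratios u).
  apply: ge_inf; last by exists u; split => //; exists X.
  exists 0 => _ [w [_ _ ->]]; apply: sup_ge0 => _ [z [_ _ ->]].
  by rewrite divr_ge0 ?cmod_ge0 ?mulr_ge0 ?sqrtr_ge0.
have := le_trans infsup_ge (le_trans infsup_le ratios_le).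
by rewrite ler_pdivlMr // mul1r mulrC ler_pdivrMr // mulrC.
Qed.

End Galerkin.

Lemma cmod_ip_op_le (R : realType) (V : lmodType R[i]) (s : V -> V -> R[i]) (T : V -> V) c x y :
  is_inner_product s -> (forall x, ipnorm s (T x) <= c * ipnorm s x) ->
  cmod (s (T x) y) <= c * ipnorm s x * ipnorm s y.
Proof.
move=> hs Tc; apply: le_trans (Cauchy_Schwarz hs _ _) _.
by rewrite ler_wpM2r ?ipnorm_ge0.
Qed.

Section ModelForms.
Variable R : realType.
Local Notation C := R[i].
Variables (H H0 : lmodType C) (ip : H -> H -> C) (ip0 : H0 -> H0 -> C).
Variables (iota DD : H -> H0) (b : H -> H -> C).
Hypotheses (hip0 : is_inner_product ip0) (iota_lin : is_linear iota) (DD_lin : is_linear DD).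
Hypotheses (iota_le : forall v, ipnorm ip0 (iota v) <= ipnorm ip v).
Hypotheses (DD_le : forall v, ipnorm ip0 (DD v) <= ipnorm ip v).
Local Notation a := (aform ip0 iota DD b).

Lemma aform_sesquilinear mu eps : is_sesquilinear b -> is_linear mu -> is_linear eps ->
  is_sesquilinear (a mu eps).
Proof.
move=> [b_lin b_antilin] mu_lin eps_lin; split=> [v c u w|u c v w].
  by rewrite /aform DD_lin mu_lin iota_lin eps_lin !(ip_linl hip0) b_lin; ring.
by rewrite /aform DD_lin iota_lin !(ip_antilinr hip0) b_antilin; ring.
Qed.

Let contraction_le {P : H -> H0} {c : R} {u v : H} : (forall w, ipnorm ip0 (P w) <= ipnorm ip w) ->
  0 <= c -> c * ipnorm ip0 (P u) * ipnorm ip0 (P v) <= c * ipnorm ip u * ipnorm ip v.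
Proof. by move=> P_le c0; rewrite -!mulrA ler_wpM2l // ler_pM ?ipnorm_ge0. Qed.

Lemma aform_bounded mu eps : is_linear mu -> is_linear eps ->
  bounded_op ip0 ip0 mu -> bounded_op ip0 ip0 eps -> bounded_form ip b ->
  bounded_form ip (a mu eps).
Proof.
move=> mu_lin eps_lin mu_bd eps_bd [Mb bM].
set Mmu := opnorm ip0 ip0 mu; set Meps := opnorm ip0 ip0 eps.
have Mmu_ge0 : 0 <= Mmu by apply: opnorm_ge0.
have Meps_ge0 : 0 <= Meps by apply: opnorm_ge0.
exists (Mmu + Mb + Meps) => u v; rewrite !mulrDl.
apply: le_trans (cmodB _ _) _; apply: lerD; first apply: le_trans (cmodD _ _) (lerD _ (bM u v)).
  apply: le_trans _ (contraction_le DD_le Mmu_ge0).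
  exact: cmod_ip_op_le (opnormP hip0 hip0 mu_lin mu_bd).
apply: le_trans _ (contraction_le iota_le Meps_ge0).
exact: cmod_ip_op_le (opnormP hip0 hip0 eps_lin eps_bd).
Qed.

Lemma aform_subE mu1 mu2 eps1 eps2 u v :
  a mu2 eps2 u v - a mu1 eps1 u v =
  ip0 (eps1 (iota u) - eps2 (iota u)) (iota v) - ip0 (mu1 (DD u) - mu2 (DD u)) (DD v).
Proof. by rewrite /aform !(lformB (ip_linl hip0 _)); ring. Qed.

Lemma aform_sub_le mu1 mu2 eps1 eps2 dmu deps u v : 0 <= dmu -> 0 <= deps ->
  (forall x, ipnorm ip0 (mu1 x - mu2 x) <= dmu * ipnorm ip0 x) ->
  (forall x, ipnorm ip0 (eps1 x - eps2 x) <= deps * ipnorm ip0 x) ->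
  cmod (a mu2 eps2 u v - a mu1 eps1 u v) <= (dmu + deps) * ipnorm ip u * ipnorm ip v.
Proof.
move=> dmu_ge0 deps_ge0 mu_le eps_le.
rewrite aform_subE [dmu + deps]addrC !mulrDl; apply: le_trans (cmodB _ _) (lerD _ _).
  apply: le_trans _ (contraction_le iota_le deps_ge0).
  exact: cmod_ip_op_le (fun x => eps1 x - eps2 x) _ _ _ hip0 eps_le.
apply: le_trans _ (contraction_le DD_le dmu_ge0).
exact: cmod_ip_op_le (fun x => mu1 x - mu2 x) _ _ _ hip0 mu_le.
Qed.

Lemma aform_sub_eps_le mu eps1 eps2 deps u v :
  (forall x, ipnorm ip0 (eps1 x - eps2 x) <= deps * ipnorm ip0 x) ->
  cmod (a mu eps2 u v - a mu eps1 u v) <=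
  deps * ipnorm ip0 (iota u) * ipnorm ip0 (iota v).
Proof.
move=> eps_le; rewrite aform_subE subrr (ip0l hip0) subr0.
exact: cmod_ip_op_le (fun x => eps1 x - eps2 x) _ _ _ hip0 eps_le.
Qed.

End ModelForms.

Theorem theorem4p2 (R : realType) (H H0 : lmodType R[i])
  (ip : H -> H -> R[i]) (ip0 : H0 -> H0 -> R[i]) (iota : H -> H0)
  (DD : H -> H0) (b : H -> H -> R[i])
  (mu1inv mu2inv eps1 eps2 : H0 -> H0)
  (A1inv : (H -> R[i]) -> H)
  (phi : forall N : nat, 'I_N -> H) (C1 : R) :
  (* standing assumptions *)
  hilbert ip -> hilbert ip0 ->
  is_linear iota -> injective iota ->
  (forall v, ipnorm ip0 (iota v) <= ipnorm ip v) ->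
  is_linear DD -> (forall u, ipnorm ip0 (DD u) <= ipnorm ip u) ->
  is_sesquilinear b -> bounded_form ip b ->
  is_linear mu1inv -> bounded_op ip0 ip0 mu1inv ->
  is_linear mu2inv -> bounded_op ip0 ip0 mu2inv ->
  is_linear eps1 -> bounded_op ip0 ip0 eps1 ->
  is_linear eps2 -> bounded_op ip0 ip0 eps2 ->
  (exists CG1 CG2 : R, [/\ 0 < CG1, 0 < CG2 & forall v : H,
     CG1 * ipnorm ip v ^+ 2 <=
       cmod (aform ip0 iota DD b mu1inv eps1 v v + (CG2 * ipnorm ip0 (iota v) ^+ 2)%:C%C)]) ->
  (exists CG1 CG2 : R, [/\ 0 < CG1, 0 < CG2 & forall v : H,
     CG1 * ipnorm ip v ^+ 2 <=
       cmod (aform ip0 iota DD b mu2inv eps2 v v + (CG2 * ipnorm ip0 (iota v) ^+ 2)%:C%C)]) ->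
  (* A_1 : H -> H^* is invertible, with (bounded) inverse A1inv : H^* -> H *)
  (forall u : H, A1inv (opA (aform ip0 iota DD b mu1inv eps1) u) = u) ->
  (forall f : H -> R[i], in_dual ip f ->
     opA (aform ip0 iota DD b mu1inv eps1) (A1inv f) = f) ->
  (exists M : R, forall f : H -> R[i], in_dual ip f ->
     ipnorm ip (A1inv f) <= M * dualnorm ip f) ->
  (* the discrete spaces H_N = span (phi N), of dimension N *)
  (forall N : nat, (0 < N)%N -> lin_indep (phi N)) ->
  0 < C1 ->
  (forall N : nat, (0 < N)%N ->
     infsup ip (aform ip0 iota DD b mu1inv eps1) (phi N)
       >= 1 / (C1 * inv_opnorm ip A1inv)) ->
  (forall N : nat, (0 < N)%N -> forall v : H, inspan (phi N) v -> v <> 0 ->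
     0 < sup [set x : R | exists u : H, [/\ inspan (phi N) u, u <> 0 &
              x = cmod (aform ip0 iota DD b mu1inv eps1 u v)]]) ->
  (opnorm ip0 ip0 (fun v => mu1inv v - mu2inv v)
     + opnorm ip0 ip0 (fun v => eps1 v - eps2 v)) * C1 * inv_opnorm ip A1inv
     <= 1 / 2 ->
  forall (N : nat) (DM : 'M[R[i]]_N), (0 < N)%N ->
  herm_posdef DM ->
  (forall X : 'cV[R[i]]_N, ipnorm ip (comb (phi N) X) = vnormM DM X) ->
  let A1 := galerkin (aform ip0 iota DD b mu1inv eps1) (phi N) in
  let A2 := galerkin (aform ip0 iota DD b mu2inv eps2) (phi N) in
  [/\ A2 \in unitmx,
      Num.max (mnorm (vnormM DM) (1%:M - invmx A2 *m A1))
              (mnorm (vnormM (invmx DM)) (1%:M - A1 *m invmx A2))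
        <= 2 * (opnorm ip0 ip0 (fun v => mu1inv v - mu2inv v)
                 + opnorm ip0 ip0 (fun v => eps1 v - eps2 v))
             * C1 * inv_opnorm ip A1inv
    & mu1inv = mu2inv ->
      forall m_minus m_plus : R, 0 < m_minus -> 0 < m_plus ->
      (forall X : 'cV[R[i]]_N,
         m_minus * vnorm2 X <= ipnorm ip0 (iota (comb (phi N) X)) <= m_plus * vnorm2 X) ->
      Num.max (mnorm (@vnorm2 R N) (1%:M - invmx A2 *m A1))
              (mnorm (@vnorm2 R N) (1%:M - A1 *m invmx A2))
        <= 2 * (m_plus / m_minus) * opnorm ip0 ip0 (fun v => eps1 v - eps2 v)
             * C1 * inv_opnorm ip A1inv].
Proof.
move=> [hip _] [hip0 _] iota_lin _ iota_le DD_lin DD_le b_ses b_bd mu1_lin mu1_bd mu2_lin mu2_bd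
  eps1_lin eps1_bd eps2_lin eps2_bd _ _ A1invK _ A1inv_bd _ C1_gt0 infsup_ge _ small
  N D N_gt0 hD combE A1 A2.
set dmu := opnorm ip0 ip0 _ in small *; set deps := opnorm ip0 ip0 _ in small *.
set k := C1 * inv_opnorm ip A1inv in infsup_ge small *.
have a1_ses := aform_sesquilinear hip0 iota_lin DD_lin b_ses mu1_lin eps1_lin.
have a2_ses := aform_sesquilinear hip0 iota_lin DD_lin b_ses mu2_lin eps2_lin.
have dmu_le := opnormBP hip0 mu1_lin mu2_lin mu1_bd mu2_bd.
have deps_le := opnormBP hip0 eps1_lin eps2_lin eps1_bd eps2_bd.
have [dmu_ge0 deps_ge0] : 0 <= dmu /\ 0 <= deps by split; apply: opnorm_ge0.
have a1_bd : bounded_form ip (aform ip0 iota DD b mu1inv eps1) by apply: aform_bounded.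
have k_gt0 : 0 < k.
  rewrite mulr_gt0 //; exact: (inv_opnorm_gt0 hip a1_ses a1_bd A1invK A1inv_bd
    (comb_neq0 hip hD combE (const_mx1_neq0 N_gt0))).
have A1_stable := infsup_galerkin_stable hip a1_ses hD combE k_gt0 (infsup_ge N N_gt0).
have A21_le X : vnormM (invmx D) ((A2 - A1) *m X) <= (dmu + deps) * vnormM D X.
  apply: vnormM_invmx_le_dual => // [|Y]; first by rewrite mulr_ge0 ?addr_ge0 ?sqrtr_ge0.
  by rewrite galerkin_subE // -!combE aform_sub_le.
have dk_le : (dmu + deps) * k <= 1 / 2 by rewrite mulrA.
have [A2_unit invA2_le mnormD_le] :=
  vnormM_perturbation N_gt0 hD k_gt0 (addr_ge0 dmu_ge0 deps_ge0) dk_le A1_stable A21_le.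
split=> //; first by rewrite -mulrA -/k.
move=> mu_eq m_minus m_plus m_minus_gt0 m_plus_gt0 m_bounds.
set q := fun X => ipnorm ip0 (iota (comb (phi N) X)).
have q_le X : q X <= vnormM D X by rewrite -combE; apply: iota_le.
have A21_dot2_le X Y : cmod (dot2 ((A2 - A1) *m X) Y) <= deps * q X * q Y.
  by rewrite galerkin_subE // -mu_eq aform_sub_eps_le.
have kappa_ge0 : 0 <= 2 * k by rewrite mulr_ge0 ?ltW.
have -> : 2 * (m_plus / m_minus) * deps * C1 * inv_opnorm ip A1inv
          = 2 * k / m_minus * (deps * m_plus) by rewrite /k; ring.
exact: (mnorm2_subr_invmx_le hD A2_unit kappa_ge0 deps_ge0 m_minus_gt0 m_plus_gt0
  invA2_le m_bounds q_le A21_dot2_le N_gt0).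
Qed.
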